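(* Let $M=\{x_i,y_i,u_i^j,v_i^j: i\in\{1,2,3\},\ j\in\mathbb N\}$ (all these points distinct) be the metric space in which $d(y_1,x_2)=d(y_2,x_3)=d(y_3,x_1)=1$, $d(x_i,u_i^j)=d(u_i^j,v_i^j)=d(v_i^j,y_i)=1$ for all $i\in\{1,2,3\}$ and $j\in\mathbb N$, and the distance between any two other distinct points is $2$; choose any base point in $M$. Then $\mathrm{Lip}_0(M)$ has the LD2P but does not have the $w^*$-D2P (and hence does not have the D2P).
   Context: $\mathrm{Lip}_0(M)$ is the real Banach space of Lipschitz $f\colon M\to\mathbb R$ vanishing at the base point, normed by the best Lipschitz constant; it is the dual of the Lipschitz-free space $\mathcal F(M)$ (norm-closed span of point evaluations in $\mathrm{Lip}_0(M)^*$), which defines its weak-star topology. A Banach space $X$ has the LD2P if every slice $\{x\in B_X:x^*(x)>1-\alpha\}$ ($\|x^*\|=1$, $\alpha>0$) of the unit ball $B_X$ has diameter $2$; it has the D2P if every nonempty relatively weakly open subset of $B_X$ has diameter $2$; a dual space has the $w^*$-D2P if every nonempty relatively weak-star open subset of $B_X$ has diameter $2$. *)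

From HB Require Import structures.
From mathcomp Require Import all_boot all_order all_algebra.
From mathcomp Require Import all_classical all_reals.
Set Implicit Arguments. Unset Strict Implicit. Unset Printing Implicit Defensive.
Import Order.TTheory GRing.Theory Num.Theory.
Local Open Scope classical_set_scope.
Local Open Scope ring_scope.

(* Indices i in {1,2,3} are represented by 'I_3 = {0,1,2}; j ranges over nat.
   Distinct constructors / arguments give distinct points. *)
Inductive Pt : Type :=
| PX of 'I_3
| PY of 'I_3
| PU of 'I_3 & nat
| PV of 'I_3 & nat.

Definition pt_eqb (p q : Pt) : bool :=
  match p, q with
  | PX i, PX k => i == k
  | PY i, PY k => i == k
  | PU i j, PU k l => (i == k) && (j == l)
  | PV i j, PV k l => (i == k) && (j == l)
  | _, _ => false
  end.

Definition edge (p q : Pt) : bool :=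
  match p, q with
  | PY i, PX k => (k : nat) == (i.+1 %% 3)%N
  | PX i, PU k _ => i == k
  | PU i j, PV k l => (i == k) && (j == l)
  | PV i _, PY k => i == k
  | _, _ => false
  end.

Definition dist {R : realType} (p q : Pt) : R :=
  if pt_eqb p q then 0 else if edge p q || edge q p then 1 else 2.

Section Lip.
Variable R : realType.
Variable base : Pt.

Definition isLip0 (f : Pt -> R) : Prop :=
  f base = 0 /\ exists L : R, forall x y, `|f x - f y| <= L * dist x y.

Definition lipnorm (f : Pt -> R) : R :=
  sup [set r : R | exists x y, ~ pt_eqb x y /\ r = `|f x - f y| / dist x y].

Definition BLip : set (Pt -> R) := [set f | isLip0 f /\ lipnorm f <= 1].

Definition diam (S : set (Pt -> R)) : R :=
  sup [set r : R | exists f g, S f /\ S g /\ r = lipnorm (f \- g)].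

(* continuous linear functionals on Lip_0(M) (values off Lip_0(M) irrelevant) *)
Definition isDual (phi : (Pt -> R) -> R) : Prop :=
  (forall (a : R) f g, isLip0 f -> isLip0 g ->
     phi (fun x => a * f x + g x) = a * phi f + phi g) /\
  exists C : R, forall f, isLip0 f -> `|phi f| <= C * lipnorm f.

Definition dualnorm (phi : (Pt -> R) -> R) : R :=
  sup [set r : R | exists f, BLip f /\ r = `|phi f|].

Definition slice (phi : (Pt -> R) -> R) (alpha : R) : set (Pt -> R) :=
  [set f | BLip f /\ phi f > 1 - alpha].

Definition LD2P : Prop :=
  forall phi, isDual phi -> dualnorm phi = 1 ->
  forall alpha : R, 0 < alpha -> diam (slice phi alpha) = 2.

(* The Lipschitz-free space F(M): norm-closure in Lip_0(M)^* of the span of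
   the point evaluations delta_x f = f x. *)
Definition inFree (mu : (Pt -> R) -> R) : Prop :=
  isDual mu /\
  forall eps : R, 0 < eps -> exists s : seq (R * Pt),
    dualnorm (fun f => mu f - \sum_(p <- s) p.1 * f p.2) < eps.

(* U is relatively open in B for the topology generated by the family P of
   functionals (basic neighbourhoods given by finitely many members of P). *)
Definition relOpen (P : ((Pt -> R) -> R) -> Prop) (U : set (Pt -> R)) : Prop :=
  U `<=` BLip /\
  forall f, U f -> exists (n : nat) (mus : nat -> (Pt -> R) -> R) (eps : R),
    0 < eps /\ (forall k, (k < n)%N -> P (mus k)) /\
    forall g, BLip g -> (forall k, (k < n)%N -> `|mus k g - mus k f| < eps) -> U g.

Definition wstarD2P : Prop :=
  forall U, relOpen inFree U -> U !=set0 -> diam U = 2.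

Definition D2P : Prop :=
  forall U, relOpen isDual U -> U !=set0 -> diam U = 2.

End Lip.

From mathcomp Require Import all_boot all_order all_algebra.
From mathcomp Require Import all_classical all_reals.
From mathcomp Require Import ring lra zify.
Set Implicit Arguments. Unset Strict Implicit. Unset Printing Implicit Defensive.
Import Order.TTheory GRing.Theory Num.Theory.
Local Open Scope classical_set_scope.
Local Open Scope ring_scope.

(* Given a norm-one functional [phi] and [f] in the unit ball with [phi f]
   close to 1, the integer parts of the translates [(N f + k) / N], [k < N], average
   to [f] up to [1/N] (Hermite's identity), so one of them is an integer-valued [g]
   in the unit ball with [phi g] almost as large.  The integer values of [g] lie in
   a band of width 2 and, by pigeonhole on the cycle x_1 y_1 x_2 y_2 x_3 y_3, leave
   room on the paths x_i u_i^j v_i^j y_i of some [i] for two resets of [g] which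
   differ by 2 between adjacent points.  The paths are disjoint, so resetting a
   path chosen among [M] fresh ones to the midpoint of the two resets decreases
   [phi] by O(1/M) at most; since [phi] of the midpoint reset is the mean of [phi]
   of the two resets, both lie in the slice, and they are at distance 2.

   Prescribing, up to 1/100, the values at the six points x_i, y_i of a
   suitable 1-Lipschitz function confines the functions of the unit ball on every
   path so much that any two of them are at distance at most 9/5.  Point
   evaluations lie in the free space, so this set is w*-open, hence weakly open. *)

Lemma sum_divn_shift (N n : nat) : (0 < N)%N -> (\sum_(k < N) (n + k) %/ N)%N = n.
Proof.
move=> N0; elim: n => [|n IH].
  by rewrite big1 // => k _; rewrite add0n divn_small.
have shift : (\sum_(k < N) (n.+1 + k) %/ N = \sum_(k < N) (n + k.+1) %/ N)%N.
  by apply: eq_bigr => k _; rewrite addSn addnS.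
have recl : (\sum_(k < N.+1) (n + k) %/ N = n %/ N + \sum_(k < N) (n + k.+1) %/ N)%N.
  by rewrite big_ord_recl addn0.
have recr : (\sum_(k < N.+1) (n + k) %/ N = n + (n + N) %/ N)%N.
  by rewrite big_ord_recr /= IH.
have last : ((n + N) %/ N = n %/ N + 1)%N by rewrite -[X in (n + X)%N]mul1n divnDMl.
lia.
Qed.

Lemma mean_le_max (R : realFieldType) (a : nat -> R) (N : nat) : (0 < N)%N ->
  exists2 k, (k < N)%N & N%:R^-1 * \sum_(t < N) a t <= a k.
Proof.
move=> N0; have [k _ kmax] := arg_maxP (fun t : 'I_N => a t) (isT : xpredT (Ordinal N0)).
exists k => //; rewrite ler_pdivrMl ?ltr0n //.
have -> : N%:R * a k = \sum_(t < N) a k by rewrite sumr_const card_ord mulr_natl.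
by apply: ler_sum => t _; apply: kmax.
Qed.

Lemma norm_sum_single (T : numDomainType) (a : nat -> T) (n : nat) (B : T) : 0 <= B ->
  (forall t, `|a t| <= B) -> (forall t s, a t != 0 -> a s != 0 -> t = s) ->
  `|\sum_(t < n) a t| <= B.
Proof.
move=> B0 aB single; elim: n => [|n IH]; first by rewrite big_ord0 normr0.
rewrite big_ord_recr /=; case: (eqVneq (a n) 0) => [->|an]; first by rewrite addr0.
rewrite big1 ?add0r // => t _; apply/eqP/negP => /negP ta.
by have := single _ _ ta an => tn; move: (ltn_ord t); rewrite tn ltnn.
Qed.

Lemma exists_inv_nat_lt (R : archiRealFieldType) (x : R) : 0 < x ->
  exists N : nat, (0 < N)%N /\ N%:R^-1 < x.
Proof.
move=> x0; exists (Num.truncn x^-1).+1; split => //.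
by rewrite -[ltRHS]invrK ltf_pV2 ?posrE ?ltr0n ?invr_gt0 ?truncnS_gt.
Qed.

Lemma exists_pos_le (R : realDomainType) (n : nat) (a : nat -> R) :
  (forall k, (k < n)%N -> 0 < a k) -> exists2 e, 0 < e & forall k, (k < n)%N -> e <= a k.
Proof.
elim: n => [|n IH] a_pos; first by exists 1.
have [e e0 ea] := IH (fun k kn => a_pos k (ltnW kn)).
exists (Num.min e (a n)); first by rewrite lt_min e0 a_pos.
move=> k; rewrite ltnS leq_eqVlt => /orP[/eqP->|kn]; first by rewrite ge_min lexx orbT.
by rewrite ge_min ea.
Qed.

Lemma pt_eqbP (p q : Pt) : reflect (p = q) (pt_eqb p q).
Proof.
case: p => [i|i|i j|i j]; case: q => [k|k|k l|k l] /=;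
  try (by constructor);
  try (by apply: (iffP eqP) => [->|[]]);
  by apply: (iffP andP) => [[/eqP-> /eqP->]|[-> ->]].
Qed.

Lemma pt_neqP (p q : Pt) : ~ pt_eqb p q <-> p <> q.
Proof. by split => H E; apply: H; [rewrite E; apply/pt_eqbP | apply/pt_eqbP]. Qed.

Definition adj (p q : Pt) : bool := edge p q || edge q p.

Lemma adjC (p q : Pt) : adj p q = adj q p.
Proof. exact: orbC. Qed.

Definition ndist (p q : Pt) : nat :=
  if pt_eqb p q then 0 else if adj p q then 1 else 2.

Lemma ndistC (p q : Pt) : ndist p q = ndist q p.
Proof.
rewrite /ndist adjC; case: (pt_eqbP p q) => [->|pq]; first by case: pt_eqbP.
by case: (pt_eqbP q p) => // qp; case: pq.
Qed.

Lemma ndist_le2 (p q : Pt) : (ndist p q <= 2)%N.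
Proof. by rewrite /ndist; case: ifP => _ //; case: ifP. Qed.

Lemma ndist_gt0 (p q : Pt) : p <> q -> (0 < ndist p q)%N.
Proof. by rewrite /ndist; case: pt_eqbP => // _ _; case: ifP. Qed.

Definition succ3 (i : 'I_3) : 'I_3 := inZp i.+1.

Lemma edgeP (p q : Pt) : edge p q ->
  (exists i, p = PY i /\ q = PX (succ3 i)) \/
  (exists i j, p = PX i /\ q = PU i j) \/
  (exists i j, p = PU i j /\ q = PV i j) \/
  (exists i j, p = PV i j /\ q = PY i).
Proof.
case: p => [i|i|i j|i j]; case: q => [k|k|k l|k l] //=.
- by move=> /eqP->; right; left; exists k, l.
- move=> /eqP E; left; exists i; split => //.
  by congr PX; apply: val_inj; rewrite /= E.
- by move=> /andP[/eqP-> /eqP->]; right; right; left; exists k, l.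
- by move=> /eqP->; right; right; right; exists k, j.
Qed.

Lemma adj_U (i : 'I_3) (j : nat) (q : Pt) : adj (PU i j) q -> q = PX i \/ q = PV i j.
Proof.
rewrite /adj; case: q => [k|k|k l|k l] //=; rewrite ?orbF.
- by move=> /eqP->; left.
- by move=> /andP[/eqP-> /eqP->]; right.
Qed.

Lemma adj_V (i : 'I_3) (j : nat) (q : Pt) : adj (PV i j) q -> q = PU i j \/ q = PY i.
Proof.
rewrite /adj; case: q => [k|k|k l|k l] //=; rewrite ?orbF.
- by move=> /eqP->; right.
- by move=> /andP[/eqP-> /eqP->]; left.
Qed.

Section Distance.
Variable R : realType.

Lemma distE (p q : Pt) : dist p q = (ndist p q)%:R :> R.
Proof. by rewrite /dist /ndist -/(adj p q); case: ifP => _ //; case: ifP. Qed.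

Lemma dist_xx (p : Pt) : dist p p = 0 :> R.
Proof. by rewrite /dist; case: pt_eqbP. Qed.

Lemma distC (p q : Pt) : dist p q = dist q p :> R.
Proof. by rewrite !distE ndistC. Qed.

Lemma dist_ge0 (p q : Pt) : 0 <= dist p q :> R.
Proof. by rewrite distE. Qed.

Lemma dist_le2 (p q : Pt) : dist p q <= 2 :> R.
Proof. by rewrite distE (ler_nat _ _ 2) ndist_le2. Qed.

Lemma dist_ge1 (p q : Pt) : p <> q -> 1 <= dist p q :> R.
Proof. by move=> /ndist_gt0; rewrite distE (ler_nat _ 1). Qed.

Lemma dist_nonadj (p q : Pt) : p <> q -> ~~ adj p q -> dist p q = 2 :> R.
Proof. by rewrite /dist; case: pt_eqbP => // _ _ /negbTE; rewrite -/(adj p q) => ->. Qed.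

Lemma dist_UX (i : 'I_3) (j : nat) : dist (PU i j) (PX i) = 1 :> R.
Proof. by rewrite /dist /= eqxx. Qed.

Lemma dist_UV (i : 'I_3) (j : nat) : dist (PU i j) (PV i j) = 1 :> R.
Proof. by rewrite /dist /= !eqxx. Qed.

Lemma dist_VY (i : 'I_3) (j : nat) : dist (PV i j) (PY i) = 1 :> R.
Proof. by rewrite /dist /= !eqxx. Qed.

End Distance.

Section Lipschitz.
Variables (R : realType) (base : Pt).
Implicit Types (f g : Pt -> R).

Lemma lipnorm_le f K : 0 <= K ->
  (forall x y, `|f x - f y| <= K * dist x y) -> lipnorm f <= K.
Proof.
move=> K0 fK; apply: ge_sup.
  by exists (`|f (PX ord0) - f (PY ord0)| / dist (PX ord0) (PY ord0)), (PX ord0), (PY ord0).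
move=> _ [x [y [/pt_neqP xy ->]]].
have d0 : 0 < dist x y :> R by apply: lt_le_trans (dist_ge1 _ xy).
by rewrite ler_pdivrMr.
Qed.

Lemma lipnorm_lip f K : (forall x y, `|f x - f y| <= K * dist x y) ->
  forall x y, `|f x - f y| <= lipnorm f * dist x y.
Proof.
move=> fK x y; case: (pt_eqbP x y) => [->|xy]; first by rewrite subrr normr0 dist_xx mulr0.
have d0 : 0 < dist x y :> R by apply: lt_le_trans (dist_ge1 _ xy).
rewrite -ler_pdivrMr //; apply: ub_le_sup; last by exists x, y; split => //; apply/pt_neqP.
exists K => _ [a [b [/pt_neqP ab ->]]].
have d1 : 0 < dist a b :> R by apply: lt_le_trans (dist_ge1 _ ab).
by rewrite ler_pdivrMr.
Qed.

Lemma isLip0_lip f : isLip0 base f -> forall x y, `|f x - f y| <= lipnorm f * dist x y.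
Proof. by case=> _ [K fK]; apply: lipnorm_lip fK. Qed.

Lemma lipnorm_ge0 f : isLip0 base f -> 0 <= lipnorm f.
Proof.
move=> /isLip0_lip /(_ (PX ord0) (PY ord0)) f_lip.
have d0 : 0 < dist (PX ord0) (PY ord0) :> R by rewrite distE.
by rewrite -(pmulr_lge0 _ d0); apply: le_trans f_lip.
Qed.

Lemma isLip0P f : isLip0 base f <-> f base = 0 /\ exists B, forall p, `|f p| <= B.
Proof.
split=> [[f0 [K fK]]|[f0 [B fB]]]; split => //.
  exists (`|K| * 2) => p; have := fK p base; rewrite f0 subr0 => /le_trans; apply.
  apply: le_trans (ler_wpM2r (dist_ge0 R p base) (ler_norm K)) _.
  by rewrite ler_wpM2l ?dist_le2.
exists (2 * B) => x y.
case: (pt_eqbP x y) => [->|xy]; first by rewrite subrr normr0 dist_xx mulr0.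
have B0 : 0 <= B by apply: le_trans (fB x).
have := dist_ge1 R xy; have := ler_normB (f x) (f y); have := fB x; have := fB y.
nra.
Qed.

Lemma isLip0_comb (a : R) f g : isLip0 base f -> isLip0 base g ->
  isLip0 base (fun x => a * f x + g x).
Proof.
move=> /isLip0P[f0 [Bf fB]] /isLip0P[g0 [Bg gB]]; apply/isLip0P.
split; first by rewrite f0 g0 mulr0 addr0.
exists (`|a| * Bf + Bg) => p; apply: le_trans (ler_normD _ _) _.
by rewrite normrM lerD // ler_wpM2l.
Qed.

Lemma isLip0_0 : isLip0 base (fun _ => 0 : R).
Proof. by apply/isLip0P; split => //; exists 0 => p; rewrite normr0. Qed.

Lemma isLip0Z (a : R) f : isLip0 base f -> isLip0 base (fun x => a * f x).
Proof.
move=> /(isLip0_comb a)/(_ isLip0_0).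
by congr isLip0; apply: funext => x; rewrite addr0.
Qed.

Lemma isLip0_sum (n : nat) (F : nat -> Pt -> R) : (forall t, isLip0 base (F t)) ->
  isLip0 base (fun x => \sum_(t < n) F t x).
Proof.
move=> FL; elim: n => [|n IH].
  by congr isLip0: isLip0_0; apply: funext => x; rewrite big_ord0.
congr isLip0: (isLip0_comb 1 IH (FL n)).
by apply: funext => x; rewrite big_ord_recr /= mul1r.
Qed.

Lemma BLipP f : BLip base f <-> f base = 0 /\ forall x y, `|f x - f y| <= dist x y.
Proof.
split=> [[fL f1]|[f0 f_lip]].
  split; first by case: fL.
  move=> x y; apply: le_trans (isLip0_lip fL x y) _.
  by rewrite ler_piMl ?dist_ge0.
have f_lip1 x y : `|f x - f y| <= 1 * dist x y by rewrite mul1r.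
by split; [split => //; exists 1 | apply: lipnorm_le].
Qed.

Lemma BLip_isLip0 f : BLip base f -> isLip0 base f.
Proof. by case. Qed.

Lemma BLip_0 : BLip base (fun _ => 0 : R).
Proof. by apply/BLipP; split => // x y; rewrite subrr normr0 dist_ge0. Qed.

Lemma BLip_le2 f p : BLip base f -> `|f p| <= 2.
Proof.
move/BLipP=> [f0 f_lip]; have := f_lip p base; rewrite f0 subr0 => /le_trans; apply.
exact: dist_le2.
Qed.

Lemma BLip_sub_lip f g : BLip base f -> BLip base g ->
  forall x y, `|(f x - g x) - (f y - g y)| <= 2 * dist x y.
Proof.
move=> /BLipP[_ f_lip] /BLipP[_ g_lip] x y.
have -> : f x - g x - (f y - g y) = (f x - f y) - (g x - g y) by ring.
by apply: le_trans (ler_normB _ _) _; rewrite mulr2n mulrDl mul1r lerD.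
Qed.

Lemma lipnorm_sub_eq2 f g x y : BLip base f -> BLip base g -> dist x y = 1 :> R ->
  `|(f x - g x) - (f y - g y)| = 2 -> lipnorm (f \- g) = 2.
Proof.
move=> fB gB dxy fgxy; have fg_lip := BLip_sub_lip fB gB.
apply/le_anti/andP; split; first exact: lipnorm_le.
by have := lipnorm_lip fg_lip x y; rewrite /= fgxy dxy mulr1.
Qed.

Lemma diam_ub (S : set (Pt -> R)) (K : R) : 0 <= K ->
  (forall f g, S f -> S g -> forall x y, `|(f x - g x) - (f y - g y)| <= K * dist x y) ->
  ubound [set r | exists f g, S f /\ S g /\ r = lipnorm (f \- g)] K.
Proof. by move=> K0 SK _ [f [g [Sf [Sg ->]]]]; apply: lipnorm_le => // x y; apply: SK. Qed.

Lemma diam_le (S : set (Pt -> R)) (K : R) : S !=set0 -> 0 <= K ->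
  (forall f g, S f -> S g -> forall x y, `|(f x - g x) - (f y - g y)| <= K * dist x y) ->
  diam S <= K.
Proof.
move=> [f Sf] K0 SK; apply: ge_sup; last exact: diam_ub.
by exists (lipnorm (f \- f)), f, f.
Qed.

Lemma diam_eq2 (S : set (Pt -> R)) f g : S `<=` BLip base -> S f -> S g ->
  lipnorm (f \- g) = 2 -> diam S = 2.
Proof.
move=> SB Sf Sg fg2.
have S2 f' g' : S f' -> S g' -> forall x y, `|(f' x - g' x) - (f' y - g' y)| <= 2 * dist x y.
  by move=> Sf' Sg'; apply: BLip_sub_lip; apply: SB.
apply/le_anti/andP; split; first by apply: diam_le => //; exists f.
by apply: ub_le_sup; [exists 2; apply: diam_ub | exists f, g].
Qed.

Lemma inFree_eval (x : Pt) : inFree base (fun f : Pt -> R => f x).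
Proof.
split.
  split => //; exists 2 => f fL; have := isLip0_lip fL x base.
  case: (fL) => -> _; rewrite subr0 => /le_trans; apply.
  by rewrite mulrC; apply: ler_wpM2r; [exact: lipnorm_ge0 fL | exact: dist_le2].
move=> e e0; exists [:: (1, x)]; apply: le_lt_trans e0; apply: ge_sup.
  by exists 0, (fun _ => 0); split; [exact: BLip_0 | rewrite big_seq1 /= mul1r subrr normr0].
by move=> _ [f [_ ->]]; rewrite big_seq1 /= mul1r subrr normr0.
Qed.

End Lipschitz.

Lemma relOpen_mono (R : realType) (base : Pt) (P Q : ((Pt -> R) -> R) -> Prop)
    (U : set (Pt -> R)) :
  (forall mu, P mu -> Q mu) -> relOpen base P U -> relOpen base Q U.
Proof.
move=> PQ [UB Uopen]; split => // f Uf.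
have [n [mus [e [e0 [Pmus mus_nbhd]]]]] := Uopen f Uf.
by exists n, mus, e; split => //; split => // k kn; apply/PQ/Pmus.
Qed.

Section DualFunctional.
Variables (R : realType) (base : Pt) (phi : (Pt -> R) -> R).
Hypothesis phi_dual : isDual base phi.
Implicit Types (f g : Pt -> R).

Lemma dual_lin (a : R) f g : isLip0 base f -> isLip0 base g ->
  phi (fun x => a * f x + g x) = a * phi f + phi g.
Proof. by case: phi_dual => lin _; apply: lin. Qed.

Lemma dual0 : phi (fun _ => 0) = 0.
Proof.
have := dual_lin 1 (isLip0_0 R base) (isLip0_0 R base).
under [in X in X = _ -> _]eq_fun do rewrite mul1r addr0.
by rewrite mul1r => E; lra.
Qed.

Lemma dualZ (a : R) f : isLip0 base f -> phi (fun x => a * f x) = a * phi f.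
Proof.
move=> fL; have := dual_lin a fL (isLip0_0 R base).
by under eq_fun do rewrite addr0; rewrite dual0 addr0.
Qed.

Lemma dualB f g : isLip0 base f -> isLip0 base g ->
  phi (fun x => f x - g x) = phi f - phi g.
Proof.
move=> fL gL; rewrite addrC -mulN1r -(dual_lin _ gL fL).
by congr phi; apply: funext => x; rewrite mulN1r addrC.
Qed.

Lemma dual_sum (n : nat) (F : nat -> Pt -> R) : (forall t, isLip0 base (F t)) ->
  phi (fun x => \sum_(t < n) F t x) = \sum_(t < n) phi (F t).
Proof.
move=> FL; elim: n => [|n IH].
  by under eq_fun do rewrite big_ord0; rewrite dual0 big_ord0.
rewrite big_ord_recr /= -IH -(mul1r (phi (fun x => \sum_(t < n) F t x))).
rewrite -dual_lin //; last exact: isLip0_sum.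
by congr phi; apply: funext => x; rewrite big_ord_recr mul1r.
Qed.

Lemma dual_mean_le (N : nat) (F : nat -> Pt -> R) : (0 < N)%N ->
  (forall t, isLip0 base (F t)) ->
  exists2 k, (k < N)%N & phi (fun x => N%:R^-1 * \sum_(t < N) F t x) <= phi (F k).
Proof.
move=> N0 FL; rewrite dualZ ?dual_sum //; last exact: isLip0_sum.
exact: mean_le_max.
Qed.

Hypothesis phi_norm1 : dualnorm base phi = 1.

Lemma dualnorm_has_sup : has_sup [set r : R | exists f, BLip base f /\ r = `|phi f|].
Proof.
case: phi_dual => _ [C phiC]; split.
  by exists `|phi (fun _ => 0)|, (fun _ => 0); split => //; apply: BLip_0.
exists (`|C|) => _ [f [[fL f1] ->]]; apply: le_trans (phiC f fL) _.
apply: le_trans (ler_wpM2r (lipnorm_ge0 fL) (ler_norm C)) _.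
by rewrite ler_piMr.
Qed.

Lemma dual_le1 f : BLip base f -> `|phi f| <= 1.
Proof.
by move=> fB; rewrite -phi_norm1; apply: (sup_upper_bound dualnorm_has_sup); exists f.
Qed.

Lemma dual_le_lip h (K : R) : h base = 0 -> 0 < K ->
  (forall x y, `|h x - h y| <= K * dist x y) -> `|phi h| <= K.
Proof.
move=> h0 K0 hK.
have hB : BLip base (fun x => K^-1 * h x).
  apply/BLipP; split => [|x y]; first by rewrite h0 mulr0.
  by rewrite -mulrBr normrM gtr0_norm ?invr_gt0 // ler_pdivrMl.
have -> : h = (fun x => K * (K^-1 * h x)).
  by apply: funext => x; rewrite mulrA mulfV ?mul1r // gt_eqF.
rewrite dualZ; last exact: BLip_isLip0 hB.
by rewrite normrM gtr0_norm //; apply: ler_piMr (ltW K0) (dual_le1 hB).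
Qed.

Lemma dual_ge_osc f g (K : R) : isLip0 base f -> isLip0 base g -> 0 < K ->
  (forall x y, `|(g x - f x) - (g y - f y)| <= K) -> phi f - K <= phi g.
Proof.
move=> fL gL K0 osc.
have : `|phi (fun x => g x - f x)| <= K.
  apply: dual_le_lip => // [|x y].
    by case: fL => -> _; case: gL => -> _; rewrite subr0.
  case: (pt_eqbP x y) => [->|xy]; first by rewrite subrr normr0 dist_xx mulr0.
  by apply: le_trans (osc x y) _; rewrite ler_pMr ?dist_ge1.
by rewrite dualB // ler_norml => /andP[+ _]; lra.
Qed.

Lemma dual_norming (beta : R) : 0 < beta -> exists2 f, BLip base f & 1 - beta < phi f.
Proof.
move=> beta0; have [_ [f [fB ->]]] := sup_adherent beta0 dualnorm_has_sup.
rewrite -/(dualnorm base phi) phi_norm1.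
case: (lerP 0 (phi f)) => [phif0|phif0]; first by rewrite ger0_norm //; exists f.
rewrite ltr0_norm // => near1; exists (fun x => -1 * f x).
  move/BLipP: fB => [f0 f_lip]; apply/BLipP; split => [|x y]; first by rewrite f0 mulr0.
  by rewrite -mulrBr normrM normrN normr1 mul1r.
by rewrite dualZ ?mulN1r //; apply: BLip_isLip0.
Qed.

End DualFunctional.

Section IntegerApproximation.
Variables (R : realType) (base : Pt).
Implicit Types (f : Pt -> R) (N : nat).

Lemma BLip_intP (z : Pt -> int) :
  BLip base (fun p => (z p)%:~R : R) -> forall p q, `|z p - z q| <= (ndist p q)%:Z.
Proof.
move=> /BLipP[_ z_lip] p q; have := z_lip p q.
by rewrite -intrB -intr_norm distE -[(ndist p q)%:R]/(((ndist p q)%:Z)%:~R : R) ler_int.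
Qed.

(* The shift by 2 makes the argument of [truncn] nonnegative on the unit ball. *)
Definition scaled_trunc N f (p : Pt) : nat := Num.truncn (N%:R * (f p + 2)).

Definition layer N f (k : nat) (p : Pt) : int :=
  ((scaled_trunc N f p + k) %/ N)%:Z - ((scaled_trunc N f base + k) %/ N)%:Z.

Lemma scaled_trunc_itv N f p : (0 < N)%N -> BLip base f ->
  (scaled_trunc N f p)%:R <= N%:R * (f p + 2) < (scaled_trunc N f p).+1%:R.
Proof.
move=> N0 fB; apply/truncn_itv/mulr_ge0; first by rewrite ler0n.
by have := BLip_le2 p fB; rewrite ler_norml => /andP[? _]; lra.
Qed.

Lemma scaled_trunc_lip N f p q : (0 < N)%N -> BLip base f ->
  (scaled_trunc N f p <= scaled_trunc N f q + N * ndist p q)%N.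
Proof.
move=> N0 fB; have N0' : 0 < N%:R :> R by rewrite ltr0n.
rewrite truncn_le_nat -addSn natrD natrM -distE.
have /andP[_ nq] := scaled_trunc_itv q N0 fB; move/BLipP: fB => [_ /(_ p q)].
rewrite ler_norml => /andP[_ fpq].
apply: le_lt_trans (_ : _ <= N%:R * (f q + 2) + N%:R * dist p q) _.
  by rewrite -mulrDr ler_pM2l //; lra.
by rewrite ltrD2r.
Qed.

Lemma layer_BLip N f k : (0 < N)%N -> BLip base f ->
  BLip base (fun p => (layer N f k p)%:~R : R).
Proof.
move=> N0 fB.
have A_lip p q : ((scaled_trunc N f p + k) %/ N <= (scaled_trunc N f q + k) %/ N + ndist p q)%N.
  rewrite -divnDMl //; apply: leq_div2r.
  by rewrite mulnC addnAC leq_add2r scaled_trunc_lip.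
apply/BLipP; split => [|p q]; first by rewrite /layer subrr.
have := A_lip p q; have := A_lip q p; rewrite ndistC -!(ler_nat R) !natrD distE.
rewrite /layer !intrD !intrN -!pmulrn => ? ?.
by rewrite ler_norml; apply/andP; split; lra.
Qed.

Lemma mean_layer N f p : (0 < N)%N ->
  N%:R^-1 * \sum_(k < N) (layer N f k p)%:~R =
  ((scaled_trunc N f p)%:R - (scaled_trunc N f base)%:R) / N%:R :> R.
Proof.
move=> N0; under eq_bigr do rewrite /layer intrD intrN -!pmulrn.
by rewrite sumrB -!natr_sum !sum_divn_shift // mulrC.
Qed.

Lemma mean_layer_osc N f p q : (0 < N)%N -> BLip base f ->
  `|(N%:R^-1 * \sum_(k < N) (layer N f k p)%:~R - f p) -
    (N%:R^-1 * \sum_(k < N) (layer N f k q)%:~R - f q)| <= N%:R^-1 :> R.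
Proof.
move=> N0 fB; have N0' : 0 < N%:R :> R by rewrite ltr0n.
have err r : - N%:R^-1 < (scaled_trunc N f r)%:R / N%:R - (f r + 2) <= 0.
  have /andP[lo hi] := scaled_trunc_itv r N0 fB; rewrite -natr1 in hi.
  have -> : (scaled_trunc N f r)%:R / N%:R - (f r + 2) =
            ((scaled_trunc N f r)%:R - N%:R * (f r + 2)) / N%:R by field; rewrite gt_eqF.
  rewrite ler_pdivrMr // mul0r ltr_pdivlMr // mulNr mulVf ?gt_eqF //.
  by apply/andP; split; lra.
rewrite !mean_layer // !mulrBl; have := err p; have := err q.
by move=> /andP[? ?] /andP[? ?]; rewrite ler_norml; apply/andP; split; lra.
Qed.

Variable phi : (Pt -> R) -> R.
Hypotheses (phi_dual : isDual base phi) (phi_norm1 : dualnorm base phi = 1).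

Lemma BLip_int_approx f N : (0 < N)%N -> BLip base f ->
  exists z : Pt -> int, BLip base (fun p => (z p)%:~R : R) /\
    phi f - N%:R^-1 <= phi (fun p => (z p)%:~R).
Proof.
move=> N0 fB; have lB k := layer_BLip k N0 fB.
have [k _ phik] := dual_mean_le phi_dual N0 (fun k => BLip_isLip0 (lB k)).
exists (layer N f k); split => //; apply: le_trans phik.
apply: (dual_ge_osc phi_dual phi_norm1); rewrite ?invr_gt0 ?ltr0n //.
- exact: BLip_isLip0 fB.
- exact: isLip0Z _ (isLip0_sum _ (fun t => BLip_isLip0 (lB t))).
by move=> p q; apply: mean_layer_osc.
Qed.

End IntegerApproximation.

Definition flexible (T : numDomainType) (g : Pt -> T) (i : 'I_3) : Prop :=
  exists m, (forall q, m <= g q <= m + 2) /\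
    (g (PX i) = m + 1 \/ g (PY i) = m + 1 \/
     g (PX i) = g (PY i) /\ (g (PX i) = m \/ g (PX i) = m + 2)).

Lemma int_band (z : Pt -> int) : (forall p q, `|z p - z q| <= 2) ->
  exists m, forall q, m <= z q <= m + 2.
Proof.
move=> z2; pose x0 := PX ord0.
case: (pselect (forall q, `|z q - z x0| <= 1)) => [near|/existsNP[q0 /negP]].
  by exists (z x0 - 1) => q; have := near q; lia.
rewrite -ltNge => far; have := z2 q0 x0.
case: (lerP (z x0) (z q0)) => q0x0 far2.
  by exists (z x0) => q; have := z2 q x0; have := z2 q q0; lia.
by exists (z q0) => q; have := z2 q x0; have := z2 q q0; lia.
Qed.

(* If no [x_i] or [y_i] takes the middle value [m + 1], all six values lie in
   [{m, m + 2}] and the edges [y_i x_(i+1)] force [z y_i = z x_(i+1)]; then two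
   consecutive values on the cycle [x_0 x_1 x_2] agree. *)
Lemma flexible_int (z : Pt -> int) :
  (forall p q, `|z p - z q| <= (ndist p q)%:Z) -> exists i, flexible z i.
Proof.
move=> z_lip.
have z2 p q : `|z p - z q| <= 2.
  by apply: le_trans (z_lip p q) _; have := ndist_le2 p q; lia.
have [m band] := int_band z2.
have e01 : `|z (PY 0) - z (PX 1)| <= 1 := z_lip _ _.
have e12 : `|z (PY 1) - z (PX 2)| <= 1 := z_lip _ _.
have e20 : `|z (PY 2) - z (PX 0)| <= 1 := z_lip _ _.
pose P (i : 'I_3) := z (PX i) = m + 1 \/ z (PY i) = m + 1 \/
  z (PX i) = z (PY i) /\ (z (PX i) = m \/ z (PX i) = m + 2).
suff : P 0 \/ P 1 \/ P 2 by case=> [|[|]] Pi; eexists; exists m; split => //; exact: Pi.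
move: (band (PX 0)) (band (PX 1)) (band (PX 2)) (band (PY 0)) (band (PY 1)) (band (PY 2)).
rewrite /P; lia.
Qed.

Lemma flexible_intr (R : numDomainType) (z : Pt -> int) (i : 'I_3) :
  flexible z i -> flexible (fun p => (z p)%:~R : R) i.
Proof.
have intrD1 (a : int) : (a + 1)%:~R = a%:~R + 1 :> R by rewrite intrD.
have intrD2 (a : int) : (a + 2)%:~R = a%:~R + 2 :> R by rewrite intrD.
case=> m [band flex]; exists m%:~R; split => [q|]; first by rewrite -intrD2 !ler_int.
case: flex => [->|[->|[-> [->|->]]]]; rewrite /= ?intrD1 ?intrD2; tauto.
Qed.

Definition admissible (R : numDomainType) (g : Pt -> R) (i : 'I_3) (u v : R) : Prop :=
  [/\ `|u - g (PX i)| <= 1, `|v - g (PY i)| <= 1, `|u - v| <= 1 &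
      forall q, `|u - g q| <= 2 /\ `|v - g q| <= 2].

Section Admissible.
Variables (R : realFieldType) (g : Pt -> R) (i : 'I_3).

Lemma admissible_band (m u v : R) : (forall q, m <= g q <= m + 2) ->
  m <= u <= m + 2 -> m <= v <= m + 2 ->
  `|u - g (PX i)| <= 1 -> `|v - g (PY i)| <= 1 -> `|u - v| <= 1 -> admissible g i u v.
Proof.
move=> band /andP[? ?] /andP[? ?] ux vy uv; split => // q.
by have /andP[? ?] := band q; rewrite !ler_norml; split; apply/andP; split; lra.
Qed.

Lemma admissible_mid (u1 v1 u2 v2 : R) : admissible g i u1 v1 -> admissible g i u2 v2 ->
  admissible g i ((u1 + u2) / 2) ((v1 + v2) / 2).
Proof.
move=> [+ + + far1] [+ + + far2]; rewrite !ler_norml.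
move=> /andP[? ?] /andP[? ?] /andP[? ?] /andP[? ?] /andP[? ?] /andP[? ?].
split; rewrite ?ler_norml; try (apply/andP; split; lra).
move=> q; have := far1 q; have := far2 q; rewrite !ler_norml.
by move=> [/andP[? ?] /andP[? ?]] [/andP[? ?] /andP[? ?]]; split; apply/andP; split; lra.
Qed.

Lemma flexible_admissible : flexible g i -> exists u1 v1 u2 v2,
  [/\ admissible g i u1 v1, admissible g i u2 v2 &
     `|u1 - u2| = 2 \/ `|v1 - v2| = 2 \/ `|(u1 - v1) - (u2 - v2)| = 2].
Proof.
case=> m [band flex]; have /andP[? ?] := band (PX i); have /andP[? ?] := band (PY i).
have norm2 (a : R) : a = 2 \/ a = -2 -> `|a| = 2 by case=> ->; rewrite ?normrN ger0_norm.
case: flex => [gx|[gy|[gxy gxm]]].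
- exists m, ((m + g (PY i)) / 2), (m + 2), ((m + 2 + g (PY i)) / 2); split.
  + by apply: (admissible_band band); rewrite ?ler_norml; apply/andP; split; lra.
  + by apply: (admissible_band band); rewrite ?ler_norml; apply/andP; split; lra.
  + by left; apply: norm2; right; ring.
- exists ((m + g (PX i)) / 2), m, ((m + 2 + g (PX i)) / 2), (m + 2); split.
  + by apply: (admissible_band band); rewrite ?ler_norml; apply/andP; split; lra.
  + by apply: (admissible_band band); rewrite ?ler_norml; apply/andP; split; lra.
  + by right; left; apply: norm2; right; ring.
- exists (m + 1), (g (PX i)), (g (PX i)), (m + 1); split.
  + by apply: (admissible_band band); rewrite -?gxy ?ler_norml; apply/andP; split; lra.
  + by apply: (admissible_band band); rewrite -?gxy ?ler_norml; apply/andP; split; lra.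
  + by right; right; apply: norm2; case: gxm => ->; [left | right]; ring.
Qed.

End Admissible.

Definition set_path (T : Type) (g : Pt -> T) (i : 'I_3) (j : nat) (u v : T) : Pt -> T :=
  fun p => if pt_eqb p (PU i j) then u else if pt_eqb p (PV i j) then v else g p.

Section SetPathValues.
Variables (T : Type) (g : Pt -> T) (i : 'I_3) (j : nat) (u v : T).

Lemma set_path_U : set_path g i j u v (PU i j) = u.
Proof. by rewrite /set_path /= !eqxx. Qed.

Lemma set_path_V : set_path g i j u v (PV i j) = v.
Proof. by rewrite /set_path /= !eqxx. Qed.

Lemma set_path_out (p : Pt) : p <> PU i j -> p <> PV i j -> set_path g i j u v p = g p.
Proof. by rewrite /set_path; do 2 case: pt_eqbP => // _. Qed.

End SetPathValues.

Definition fresh_path (base : Pt) : nat :=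
  match base with PU _ j | PV _ j => j.+1 | _ => 0 end.

Lemma base_off_path (base : Pt) (i : 'I_3) (j : nat) : (fresh_path base <= j)%N ->
  base <> PU i j /\ base <> PV i j.
Proof. by case: base => [k|k|k l|k l] /= lj; split => // [[_ E]]; rewrite E ltnn in lj. Qed.

Section SetPath.
Variables (R : realType) (base : Pt).
Implicit Types (f g : Pt -> R).

Lemma set_path_lip g i j u v :
  (forall x y, `|g x - g y| <= dist x y) -> admissible g i u v ->
  forall x y, `|set_path g i j u v x - set_path g i j u v y| <= dist x y.
Proof.
move=> g_lip [ux vy uv far].
have from_path x y : x = PU i j \/ x = PV i j ->
    `|set_path g i j u v x - set_path g i j u v y| <= dist x y.
  move=> x_on; case: (pt_eqbP y (PU i j)) => [->|yu].
    case: x_on => ->; first by rewrite subrr normr0 dist_ge0.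
    by rewrite set_path_U set_path_V distrC distC dist_UV.
  case: (pt_eqbP y (PV i j)) => [->|yv].
    case: x_on => ->; last by rewrite subrr normr0 dist_ge0.
    by rewrite set_path_U set_path_V dist_UV.
  rewrite [set_path _ _ _ _ _ y]set_path_out //.
  case: x_on => ->; [rewrite set_path_U | rewrite set_path_V].
  - case: (pt_eqbP y (PX i)) => [->|yx]; first by rewrite dist_UX.
    rewrite dist_nonadj; first by case: (far y).
      by move=> E; apply: yu.
    by apply/negP => /adj_U[].
  - case: (pt_eqbP y (PY i)) => [->|yy]; first by rewrite dist_VY.
    rewrite dist_nonadj; first by case: (far y).
      by move=> E; apply: yv.
    by apply/negP => /adj_V[].
move=> x y.
case: (pt_eqbP x (PU i j)) => [xu|xu]; first by apply: from_path; left.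
case: (pt_eqbP x (PV i j)) => [xv|xv]; first by apply: from_path; right.
case: (pt_eqbP y (PU i j)) => [yu|yu]; first by rewrite distrC distC; apply: from_path; left.
case: (pt_eqbP y (PV i j)) => [yv|yv]; first by rewrite distrC distC; apply: from_path; right.
by rewrite !set_path_out.
Qed.

Lemma set_path_BLip g i j u v : BLip base g -> admissible g i u v ->
  base <> PU i j -> base <> PV i j -> BLip base (set_path g i j u v).
Proof.
move=> /BLipP[g0 g_lip] adm bu bv; apply/BLipP; split; first by rewrite set_path_out.
exact: set_path_lip.
Qed.

End SetPath.

Lemma set_path_mid (F : numFieldType) (g : Pt -> F) i j (u1 v1 u2 v2 : F) :
  set_path g i j ((u1 + u2) / 2) ((v1 + v2) / 2) =
  (fun x => 2^-1 * set_path g i j u1 v1 x + 2^-1 * set_path g i j u2 v2 x).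
Proof.
apply: funext => x; rewrite /set_path.
by case: pt_eqb; [|case: pt_eqb]; field.
Qed.

Section PathAveraging.
Variables (R : realType) (base : Pt) (phi : (Pt -> R) -> R).
Hypotheses (phi_dual : isDual base phi) (phi_norm1 : dualnorm base phi = 1).

(* The paths [j0 + t] are disjoint, so each point is moved by at most one of them. *)
Lemma mean_set_path_near (g : Pt -> R) i u v (j0 M : nat) (p : Pt) :
  (0 < M)%N -> admissible g i u v ->
  `|M%:R^-1 * \sum_(t < M) set_path g i (j0 + t) u v p - g p| <= 2 / M%:R.
Proof.
move=> M0 [_ _ _ far]; have M0' : 0 < M%:R :> R by rewrite ltr0n.
have -> : M%:R^-1 * \sum_(t < M) set_path g i (j0 + t) u v p - g p =
          M%:R^-1 * \sum_(t < M) (set_path g i (j0 + t) u v p - g p).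
  by rewrite sumrB sumr_const card_ord mulrBr -[g p *+ M]mulr_natl mulKf ?gt_eqF.
rewrite normrM gtr0_norm ?invr_gt0 // mulrC ler_pM2r ?invr_gt0 //.
have on_path t : set_path g i (j0 + t) u v p - g p != 0 ->
    p = PU i (j0 + t) \/ p = PV i (j0 + t).
  rewrite /set_path; case: pt_eqbP => [->|_]; first by left.
  by case: pt_eqbP => [->|_]; [right | rewrite subrr eqxx].
apply: (norm_sum_single (a := fun t => set_path g i (j0 + t) u v p - g p)) => // [t|t s ta sa].
  rewrite /set_path; case: ifP => _; first by case: (far p).
  by case: ifP => _; [case: (far p) | rewrite subrr normr0].
by have := on_path s sa; case: (on_path t ta) => -> [] // [] /addnI.
Qed.

Lemma set_path_pair (g : Pt -> R) i u1 v1 u2 v2 (M : nat) : (0 < M)%N -> BLip base g ->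
  admissible g i u1 v1 -> admissible g i u2 v2 ->
  exists j, [/\ base <> PU i j, base <> PV i j,
    2 * phi g - 8 / M%:R - 1 <= phi (set_path g i j u1 v1) &
    2 * phi g - 8 / M%:R - 1 <= phi (set_path g i j u2 v2)].
Proof.
move=> M0 gB adm1 adm2; have M0' : 0 < M%:R :> R by rewrite ltr0n.
pose j0 := fresh_path base.
have sB u v t : admissible g i u v -> BLip base (set_path g i (j0 + t) u v).
  by have [bu bv] := base_off_path i (leq_addr t j0); move=> admuv; apply: set_path_BLip.
have adm := admissible_mid adm1 adm2.
pose w t := set_path g i (j0 + t) ((u1 + u2) / 2) ((v1 + v2) / 2).
have [t _ wt] := dual_mean_le phi_dual M0 (fun t => BLip_isLip0 (sB _ _ t adm)).
have mean_ge : phi g - 4 / M%:R <= phi (fun x => M%:R^-1 * \sum_(t < M) w t x).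
  apply: (dual_ge_osc phi_dual phi_norm1); rewrite ?divr_gt0 //.
  - exact: BLip_isLip0 gB.
  - by apply/isLip0Z/isLip0_sum => t'; apply: BLip_isLip0 (sB _ _ t' adm).
  move=> x y; apply: le_trans (ler_normB _ _) _.
  by have := mean_set_path_near j0 x M0 adm; have := mean_set_path_near j0 y M0 adm; lra.
have w_mid : phi (w t) =
    (phi (set_path g i (j0 + t) u1 v1) + phi (set_path g i (j0 + t) u2 v2)) / 2.
  rewrite /w set_path_mid.
  have s1L := BLip_isLip0 (sB _ _ t adm1); have s2L := BLip_isLip0 (sB _ _ t adm2).
  by rewrite (dual_lin phi_dual) ?(dualZ phi_dual) //; [field | exact: isLip0Z].
have := dual_le1 phi_dual phi_norm1 (sB _ _ t adm1).
have := dual_le1 phi_dual phi_norm1 (sB _ _ t adm2).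
have := le_trans mean_ge wt; rewrite w_mid !ler_norml => ? /andP[_ ?] /andP[_ ?].
have [bu bv] := base_off_path i (leq_addr t j0).
by exists (j0 + t)%N; split => //; lra.
Qed.

End PathAveraging.

Theorem LD2P_holds (R : realType) (base : Pt) : LD2P R base.
Proof.
move=> phi phi_dual phi_norm1 alpha alpha0.
have b0 : 0 < alpha / 16 by rewrite divr_gt0.
have [f fB phif] := dual_norming phi_dual phi_norm1 b0.
have [N [N0 invN]] := exists_inv_nat_lt b0.
have [z [zB phiz]] := BLip_int_approx phi_dual phi_norm1 N0 fB.
have [i /(flexible_intr R) flex] := flexible_int (BLip_intP zB).
have [u1 [v1 [u2 [v2 [adm1 adm2 sep]]]]] := flexible_admissible flex.
have [j [bu bv phi1 phi2]] := set_path_pair phi_dual phi_norm1 N0 zB adm1 adm2.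
have s1B := set_path_BLip zB adm1 bu bv; have s2B := set_path_BLip zB adm2 bu bv.
apply: (@diam_eq2 R base _ (set_path (fun p => (z p)%:~R) i j u1 v1)
                            (set_path (fun p => (z p)%:~R) i j u2 v2)).
- by move=> h [].
- by split => //; lra.
- by split => //; lra.
case: sep => [sep|[sep|sep]].
- apply: (lipnorm_sub_eq2 s1B s2B (dist_UX R i j)).
  by rewrite !set_path_U !set_path_out // subrr subr0.
- apply: (lipnorm_sub_eq2 s1B s2B (dist_VY R i j)).
  by rewrite !set_path_V !set_path_out // subrr subr0.
- apply: (lipnorm_sub_eq2 s1B s2B (dist_UV R i j)).
  by rewrite !set_path_U !set_path_V -sep; congr `|_|; ring.
Qed.

Definition pinned (p : Pt) : bool :=
  match p with PX _ | PY _ => true | _ => false end.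

Lemma adj_unpinned (p q : Pt) : adj p q -> ~~ pinned p -> ~~ pinned q ->
  exists i j, (p = PU i j /\ q = PV i j) \/ (p = PV i j /\ q = PU i j).
Proof.
by rewrite /adj => /orP[] /edgeP
  [[i [-> ->]]|[[i [j [-> ->]]]|[[i [j [-> ->]]]|[i [j [-> ->]]]]]] //; exists i, j; auto.
Qed.

Section NotWeakStarD2P.
Variables (R : realType) (base : Pt).
Implicit Types (f g h : Pt -> R).

(* Every point is within distance 2 of [x_0] and [y_0], so the values [0] and [2]
   there force all nearby functions into [[0, 2]] (up to the shift by the base point);
   with [|cx i - cy i| >= 5/4] this confines their values on each path to intervals of
   length at most [3/2], and their increments along [u_i^j v_i^j] to intervals of
   length at most [7/4]. *)
Definition cx (i : 'I_3) : R := match val i with 0 => 0 | 1 => 7/4 | _ => 3/2 end.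
Definition cy (i : 'I_3) : R := match val i with 0 => 2 | 1 => 1/2 | _ => 1/4 end.

Definition center_val (p : Pt) : R :=
  match p with
  | PX i => cx i
  | PY i => cy i
  | PU i _ | PV i _ => (cx i + cy i) / 2
  end.

Definition center (p : Pt) : R := center_val p - center_val base.

Lemma center_val_range (p : Pt) : 0 <= center_val p <= 2.
Proof. by case: p => [i|i|i j|i j]; case: i => [[|[|[|//]]] ?]; rewrite /= /cx /cy /=; lra. Qed.

Lemma center_val_lip (p q : Pt) : `|center_val p - center_val q| <= dist p q.
Proof.
case: (pt_eqbP p q) => [->|pq]; first by rewrite subrr normr0 dist_ge0.
case/boolP: (adj p q) => [pq_adj|/(dist_nonadj R pq)->]; last first.
  have /andP[? ?] := center_val_range p; have /andP[? ?] := center_val_range q.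
  by rewrite ler_norml; apply/andP; split; lra.
rewrite distE /ndist -/(adj p q) pq_adj; case: pt_eqbP => // _.
suff edge_lip a b : edge a b -> `|center_val a - center_val b| <= 1.
  by move: pq_adj; rewrite /adj => /orP[/edge_lip //|/edge_lip]; rewrite distrC.
case/edgeP => [[i [-> ->]]|[[i [j [-> ->]]]|[[i [j [-> ->]]]|[i [j [-> ->]]]]]] /=.
  by case: i => [[|[|[|//]]] ?]; rewrite /cx /cy /= ler_norml; apply/andP; split; lra.
all: have := center_val_range (PX i); have := center_val_range (PY i).
all: by rewrite /= ?subrr ?normr0 // ler_norml => /andP[? ?] /andP[? ?]; apply/andP; split; lra.
Qed.

Lemma center_BLip : BLip base center.
Proof.
apply/BLipP; split => [|p q]; first by rewrite /center subrr.
by rewrite /center opprB addrA subrK center_val_lip.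
Qed.

Definition pin (k : nat) : Pt := if (k < 3)%N then PX (inord k) else PY (inord (k - 3)).

Definition nbhd : set (Pt -> R) :=
  [set g | BLip base g /\ forall k, (k < 6)%N -> `|g (pin k) - center (pin k)| < 1/100].

Lemma center_nbhd : nbhd center.
Proof. by split => [|k _]; [exact: center_BLip | rewrite subrr normr0; lra]. Qed.

Lemma nbhd_pin g (i : 'I_3) : nbhd g ->
  `|g (PX i) - center (PX i)| < 1/100 /\ `|g (PY i) - center (PY i)| < 1/100.
Proof.
move=> [_ g_pin]; have i3 := ltn_ord i.
have pinX : pin i = PX i by rewrite /pin i3 inord_val.
have pinY : pin (i + 3) = PY i by rewrite /pin ifN ?addnK ?inord_val // -leqNgt leq_addl.
by split; [have := g_pin i | have := g_pin (i + 3)%N]; rewrite ?pinX ?pinY; apply; lia.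
Qed.

Lemma nbhd_pinned g h p : nbhd g -> nbhd h -> pinned p -> `|g p - h p| <= 1/50.
Proof.
case: p => // i gN hN _; have [gx gy] := nbhd_pin i gN; have [hx hy] := nbhd_pin i hN.
- move: gx hx; rewrite !ltr_norml ler_norml => /andP[? ?] /andP[? ?].
  by apply/andP; split; lra.
- move: gy hy; rewrite !ltr_norml ler_norml => /andP[? ?] /andP[? ?].
  by apply/andP; split; lra.
Qed.

Lemma nbhd_path g h i j : nbhd g -> nbhd h ->
  [/\ `|g (PU i j) - h (PU i j)| <= 3/2 + 1/50,
      `|g (PV i j) - h (PV i j)| <= 3/2 + 1/50 &
      `|(g (PU i j) - h (PU i j)) - (g (PV i j) - h (PV i j))| <= 7/4 + 1/50].
Proof.
have facts f : nbhd f ->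
    `|f (PU i j) - f (PX i)| <= 1 /\ `|f (PV i j) - f (PY i)| <= 1 /\
    `|f (PU i j) - f (PV i j)| <= 1 /\
    `|f (PU i j) - f (PX 0)| <= 2 /\ `|f (PU i j) - f (PY 0)| <= 2 /\
    `|f (PV i j) - f (PX 0)| <= 2 /\ `|f (PV i j) - f (PY 0)| <= 2 /\
    `|f (PX 0) - center (PX 0)| < 1/100 /\ `|f (PY 0) - center (PY 0)| < 1/100 /\
    `|f (PX i) - center (PX i)| < 1/100 /\ `|f (PY i) - center (PY i)| < 1/100.
  move=> fN; have [/BLipP[_ f_lip] _] := fN.
  have f2 p q : `|f p - f q| <= 2 := le_trans (f_lip p q) (dist_le2 R p q).
  have := f_lip (PU i j) (PX i); have := f_lip (PV i j) (PY i); have := f_lip (PU i j) (PV i j).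
  rewrite dist_UX dist_VY dist_UV; have [? ?] := nbhd_pin 0 fN; have [? ?] := nbhd_pin i fN.
  by do !split; rewrite ?f2.
move=> /facts gF /facts hF {facts}; move: gF hF; rewrite /center; move: (center_val base) => c.
by case: i => [[|[|[|//]]] ?]; rewrite /= /cx /cy /= !ler_norml !ltr_norml => ? ?; split; lra.
Qed.

Lemma nbhd_close g h p : nbhd g -> nbhd h -> `|g p - h p| <= 3/2 + 1/50.
Proof.
move=> gN hN; case: p => [i|i|i j|i j]; try by case: (nbhd_path i j gN hN).
- by apply: le_trans (@nbhd_pinned g h (PX i) gN hN isT) _; lra.
- by apply: le_trans (@nbhd_pinned g h (PY i) gN hN isT) _; lra.
Qed.

Lemma nbhd_sub_lip g h : nbhd g -> nbhd h ->
  forall p q, `|(g p - h p) - (g q - h q)| <= 9/5 * dist p q.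
Proof.
move=> gN hN p q.
case: (pt_eqbP p q) => [->|pq]; first by rewrite subrr normr0 dist_xx mulr0.
have d1 := dist_ge1 R pq; have := ler_normB (g p - h p) (g q - h q).
have := nbhd_close p gN hN; have := nbhd_close q gN hN.
case/boolP: (pinned p) => [/(nbhd_pinned gN hN)|pu]; first lra.
case/boolP: (pinned q) => [/(nbhd_pinned gN hN)|qu]; first lra.
case/boolP: (adj p q) => [/adj_unpinned/(_ pu qu)|/(dist_nonadj R pq)->]; last lra.
move=> [i [j [[-> ->]|[-> ->]]]] _ _ _; rewrite ?(distC _ (PV i j)) dist_UV.
  by case: (nbhd_path i j gN hN) => _ _; lra.
by rewrite distrC; case: (nbhd_path i j gN hN) => _ _; lra.
Qed.

Lemma nbhd_diam : diam nbhd <= 9/5.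
Proof.
apply: diam_le => [||f g fN gN]; [by exists center; apply: center_nbhd | lra |].
exact: nbhd_sub_lip.
Qed.

Lemma nbhd_open : relOpen base (inFree base) nbhd.
Proof.
split => [f [] //|f [fB f_pin]].
have slack k : (k < 6)%N -> 0 < 1/100 - `|f (pin k) - center (pin k)|.
  by move=> /f_pin; lra.
have [e e0 e_le] := exists_pos_le slack.
exists 6%N, (fun k g => g (pin k)), e; split => //; split => [k _|g gB g_near].
  exact: inFree_eval.
split => // k k6; have := g_near k k6; have := e_le k k6.
have := ler_distD (f (pin k)) (g (pin k)) (center (pin k)); rewrite /=; lra.
Qed.

End NotWeakStarD2P.

Theorem mainTheorem17 (R : realType) (base : Pt) :
  LD2P R base /\ ~ wstarD2P R base /\ ~ D2P R base.
Proof.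
have nbhd_ne : @nbhd R base !=set0 by exists (@center R base); apply: center_nbhd.
have nbhd_neq2 : diam (@nbhd R base) <> 2 by move=> diam2; have := @nbhd_diam R base; lra.
split; first exact: LD2P_holds.
split => [wD2P|D2P]; apply: nbhd_neq2.
- exact: wD2P (@nbhd_open R base) nbhd_ne.
- by apply: D2P nbhd_ne; apply: relOpen_mono (@nbhd_open R base) => mu [].
Qed.
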